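(* Let $N$ be a finite group, let $\pi$ be the set of prime divisors of $|N|$, and assume that $\mathrm{Hol}(N)$ has a unique Hall $\pi$-subgroup $Q$. Let $G$ be a subgroup of $\mathrm{Hol}(N)$ and $H$ any subgroup of $G$. Then: (a) if $G$ is transitive, then $G\cap Q$ is also transitive; (b) if every prime factor of $[G:H]$ divides $|N|$, then $[G:H]=[G\cap Q:H\cap Q]$.
   Context: $\mathrm{Hol}(N)=N\rtimes\mathrm{Aut}(N)$ acts on $N$ by $(\eta,\alpha)\cdot x=\eta\,\alpha(x)$; a subgroup is transitive if it acts transitively on $N$. *)

From mathcomp Require Import all_boot all_fingroup all_solvable.
Set Implicit Arguments. Unset Strict Implicit. Unset Printing Implicit Defensive.
Local Open Scope group_scope.

(* The holomorph Hol(N) = N x| Aut(N) of a finite group N (here N is the whole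
   finGroupType gT), realized faithfully through its natural action on N:
   the pair (eta, alpha) acts as x |-> eta * alpha x. *)
Definition holo (gT : finGroupType) : {set {perm gT}} :=
  [set p : {perm gT} | [exists eta : gT, exists a in Aut [set: gT],
                          [forall x : gT, p x == eta * a x]]].

Definition transitive_on_N (gT : finGroupType) (G : {set {perm gT}}) : bool :=
  [transitive G, on [set: gT] | 'P].

From mathcomp Require Import all_boot all_fingroup all_solvable.
Set Implicit Arguments. Unset Strict Implicit. Unset Printing Implicit Defensive.
Local Open Scope group_scope.

(* Being the unique Hall pi-subgroup of Hol(N), Q is normal, so G :&: Q is a
   Hall pi-subgroup of every subgroup G of Hol(N).  Hence for H <= G of
   pi-index, #|G : H| = #|G|_pi / #|H|_pi = #|G :&: Q : H :&: Q|.  A transitive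
   G has the stabiliser of 1 of index #|N|, a pi-number; since the stabiliser
   of 1 in G :&: Q is that stabiliser intersected with Q, the orbit of 1 under
   G :&: Q also has #|N| points. *)

Lemma holo_group_set (gT : finGroupType) : group_set (holo gT).
Proof.
apply/group_setP; split.
  rewrite inE; apply/existsP; exists 1; apply/existsP; exists 1.
  by rewrite group1; apply/forallP => x; rewrite !perm1 mul1g.
move=> p q; rewrite !inE => /existsP[e /existsP[a /andP[Aa /forallP pE]]].
move=> /existsP[f /existsP[b /andP[Ab /forallP qE]]].
apply/existsP; exists (f * b e); apply/existsP; exists (a * b).
rewrite groupM //=; apply/forallP => x.
have bM := morphicP (Aut_morphic Ab).
by rewrite !permM (eqP (pE x)) (eqP (qE _)) bM ?in_setT // mulgA.
Qed.

Canonical holo_group (gT : finGroupType) := Group (holo_group_set gT).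

Lemma Hall_normal_uniq (gT : finGroupType) pi (K Q : {group gT}) :
    pi.-Hall(K) Q -> (forall Q' : {group gT}, pi.-Hall(K) Q' -> Q' = Q) ->
  Q <| K.
Proof.
move=> hallQ uniqQ; rewrite /normal (pHall_sub hallQ); apply/subsetP => x Kx.
suff /(congr1 val) /= QxQ : (Q :^ x)%G = Q by rewrite inE QxQ.
by apply: uniqQ; rewrite /= -{1}(conjGid Kx) pHallJ2.
Qed.

Lemma indexgI_normal_Hall (gT : finGroupType) pi (K Q G H : {group gT}) :
    pi.-Hall(K) Q -> Q <| K -> G \subset K -> H \subset G ->
    pi.-nat #|G : H| ->
  #|G : H| = #|G :&: Q : H :&: Q|.
Proof.
move=> hallQ nsQK sGK sHG piGH.
have cardIQ (L : {group gT}) : L \subset K -> #|L :&: Q| = (#|L|`_pi)%N.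
  by move=> sLK; rewrite setIC (card_Hall (setI_normal_Hall nsQK hallQ sLK)).
apply/eqP; rewrite -(eqn_pmul2l (cardG_gt0 (H :&: Q)%G)) Lagrange ?setSI //.
rewrite !cardIQ ?(subset_trans sHG) // -(Lagrange sHG).
by rewrite partnM ?cardG_gt0 ?indexg_gt0 // (part_pnat_id piGH).
Qed.

Lemma pnat_prime_dvd m n :
  0 < m -> 0 < n -> (forall p, prime p -> p %| m -> p %| n) -> \pi(n).-nat m.
Proof.
move=> m_gt0 n_gt0 dvd_mn; apply/pnatP => // p p_pr p_m.
by rewrite mem_primes p_pr n_gt0 dvd_mn.
Qed.

Lemma atransT_card_orbit (T : finType) (G : {group {perm T}}) x :
  [transitive G, on [set: T] | 'P] = (#|orbit 'P G x| == #|T|).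
Proof.
apply/idP/idP => [trG | /eqP orbG]; first by rewrite (atransP trG) ?cardsT.
apply/imsetP; exists x => //; apply/eqP; rewrite -cardsT in orbG.
by rewrite eq_sym eqEcard subsetT -orbG leqnn.
Qed.

Theorem lemma2p1 (gT : finGroupType) (Q : {group {perm gT}})
  (hQ : \pi(#|gT|).-Hall(holo gT) Q)
  (uQ : forall Q' : {group {perm gT}}, \pi(#|gT|).-Hall(holo gT) Q' -> Q' = Q)
  (G H : {group {perm gT}}) (sGHol : G \subset holo gT) (sHG : H \subset G) :
  (transitive_on_N G -> transitive_on_N (G :&: Q)) /\
  ((forall p : nat, prime p -> p %| #|G : H| -> p %| #|gT|) ->
     #|G : H| = #|G :&: Q : H :&: Q|).
Proof.
have nsQ : Q <| holo_group gT := Hall_normal_uniq hQ uQ.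
have gT_gt0 : 0 < #|gT| by apply/card_gt0P; exists 1.
split=> [|dvdGH].
  rewrite /transitive_on_N !(atransT_card_orbit _ 1) !card_orbit => /eqP orbG.
  have piG1 : \pi(#|gT|).-nat #|G : 'C_G[1 | 'P]| by rewrite orbG pnat_pi.
  by rewrite setIAC -(indexgI_normal_Hall hQ nsQ sGHol (subsetIl _ _) piG1) orbG.
apply: (indexgI_normal_Hall hQ nsQ sGHol sHG).
exact: pnat_prime_dvd (indexg_gt0 G H) gT_gt0 dvdGH.
Qed.
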